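(* Let $0<\kappa<1$ and $\lambda=\sqrt{1-\kappa^2}$. For $\phi$ near $0$ define $$u(\phi)=\int_0^{\phi} F\!\left(\tfrac14,\tfrac34;\tfrac12;\kappa^2\sin^2\theta\right)\,\mathrm{d}\theta ,$$ let $u\mapsto\phi(u)$ be the local inverse near $0$ with $\phi(0)=0$, let $\psi=\psi(u)$ be defined near $u=0$ with $\psi(0)=0$ and $\sin\psi=\kappa\sin\phi$, and set $d=\cos\psi$. Then $d$ satisfies the differential equation $$(d')^2=2\,(1-d)\,(d^2-\lambda^2),$$ where $'$ denotes differentiation with respect to $u$.
   Context: $F(a,b;c;z)$ denotes the Gauss hypergeometric function ${}_2F_1(a,b;c;z)$. *)

From Stdlib Require Import Reals Factorial.
From Coquelicot Require Import Coquelicot.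
Open Scope R_scope.

Fixpoint poch (a : R) (n : nat) : R :=
  match n with
  | O => 1
  | S m => poch a m * (a + INR m)
  end.

Definition hyp2F1 (a b c z : R) : R :=
  Series (fun n => poch a n * poch b n / (poch c n * INR (Factorial.fact n)) * z ^ n).

Definition u_of (kappa phi : R) : R :=
  RInt (fun theta => hyp2F1 (1/4) (3/4) (1/2) (kappa ^ 2 * (sin theta) ^ 2)) 0 phi.

(** The integrand of [u] has the closed form
    [F(1/4,3/4;1/2;w^2) = ((1-w)^(-1/2) + (1+w)^(-1/2)) / 2],
    the even part of the binomial series of [(1-w)^(-1/2)], because
    [(1/2)_(2n)/(2n)! = (1/4)_n (3/4)_n / ((1/2)_n n!)] by Legendre duplication.
    With [s = sin phi], [A = sqrt(1 - kappa s)], [B = sqrt(1 + kappa s)] this gives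
    [du/dphi = (1/A + 1/B)/2], while [d = cos psi = sqrt(1 - kappa^2 s^2) = A B]
    since [cos psi] starts at [1] and cannot vanish. Hence
    [d' = -2 kappa^2 s cos phi / (A + B)], and as [(A + B)^2 = 2 (1 + d)],
    [1 - d^2 = kappa^2 s^2] and [d^2 - lambda^2 = kappa^2 cos^2 phi],
    both sides of the equation equal [4 kappa^4 s^2 cos^2 phi / (A + B)^2]. *)

From Stdlib Require Import Reals Lra Lia Factorial Ranalysis5.
From Coquelicot Require Import Coquelicot.
Open Scope R_scope.

Lemma CV_disk_bounded_coef (a : nat -> R) (r : R) :
  (forall n, Rabs (a n) <= 1) -> Rabs r < 1 -> CV_disk a r.
Proof.
  intros Ha Hr.
  apply (@ex_series_le R_AbsRing R_CompleteNormedModule _ (fun n => Rabs r ^ n)).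
  - intros n. change norm with Rabs. simpl.
    rewrite Rabs_Rabsolu, Rabs_mult, <- RPow_abs.
    pose proof (Ha n). pose proof (Rabs_pos (a n)).
    pose proof (pow_le (Rabs r) n (Rabs_pos r)). nra.
  - apply ex_series_geom. rewrite Rabs_Rabsolu. exact Hr.
Qed.

Lemma CV_radius_bounded_coef (a : nat -> R) (r : R) :
  (forall n, Rabs (a n) <= 1) -> Rabs r < 1 -> Rbar_lt (Rabs r) (CV_radius a).
Proof.
  intros Ha Hr.
  set (r' := (Rabs r + 1) / 2).
  pose proof (Rabs_pos r).
  assert (Er' : Rabs r' = r') by (apply Rabs_right; unfold r'; lra).
  apply Rbar_lt_le_trans with (Finite (Rabs r')).
  - simpl. rewrite Er'. unfold r'. lra.
  - destruct (Lub_Rbar_correct (CV_disk a)) as [Hub _].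
    apply Hub, CV_disk_le with r'; [rewrite Rabs_Rabsolu; lra|].
    apply CV_disk_bounded_coef; [assumption|]. rewrite Er'. unfold r'. lra.
Qed.

Lemma poch_1 n : poch 1 n = INR (fact n).
Proof.
  induction n as [|n IH]; [reflexivity|].
  simpl poch. rewrite IH, fact_simpl, mult_INR, S_INR. ring.
Qed.

Lemma poch_double a n :
  poch a (2 * n) = 4 ^ n * poch (a / 2) n * poch ((a + 1) / 2) n.
Proof.
  induction n as [|n IH]; [simpl; ring|].
  replace (2 * S n)%nat with (S (S (2 * n))) by lia.
  change (poch a (S (S (2 * n)))) with
    (poch a (2 * n) * (a + INR (2 * n)) * (a + INR (S (2 * n)))).
  rewrite IH, S_INR, mult_INR. simpl poch. simpl INR. cbn [pow]. field.
Qed.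

Lemma poch_pos a n : 0 < a -> 0 < poch a n.
Proof.
  intros Ha. induction n as [|n IH]; simpl; [lra|].
  pose proof (pos_INR n). apply Rmult_lt_0_compat; lra.
Qed.

(** Coefficients of the binomial series of [(1 - w)^(-1/2)]. *)
Definition binom_half (n : nat) : R := poch (1/2) n / INR (fact n).

Lemma binom_half_0 : binom_half 0 = 1.
Proof. unfold binom_half; simpl. field. Qed.

Lemma binom_half_S n : binom_half (S n) = binom_half n * (1/2 + INR n) / INR (S n).
Proof.
  unfold binom_half. simpl poch. rewrite fact_simpl, mult_INR. field.
  split; [apply INR_fact_neq_0 | apply not_0_INR; lia].
Qed.

Lemma binom_half_bounds n : 0 < binom_half n <= 1.
Proof.
  induction n as [|n IH]; [rewrite binom_half_0; lra|].
  rewrite binom_half_S, S_INR. pose proof (pos_INR n).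
  split.
  - apply Rdiv_lt_0_compat; [apply Rmult_lt_0_compat|]; lra.
  - apply Rmult_le_reg_r with (INR n + 1); [lra|].
    unfold Rdiv. rewrite Rmult_assoc, Rinv_l by lra. nra.
Qed.

Lemma Rabs_binom_half_le_1 n : Rabs (binom_half n) <= 1.
Proof. pose proof (binom_half_bounds n). rewrite Rabs_right; lra. Qed.

Lemma binom_half_ode w : Rabs w < 1 ->
  (1 - w) * PSeries (PS_derive binom_half) w = PSeries binom_half w / 2.
Proof.
  intros Hw.
  pose proof (CV_radius_bounded_coef _ _ Rabs_binom_half_le_1 Hw) as Hr.
  assert (E : ex_pseries (PS_derive binom_half) w) by (apply ex_pseries_derive; auto).
  replace ((1 - w) * PSeries (PS_derive binom_half) w) with
    (PSeries (PS_derive binom_half) w - PSeries (PS_incr_1 (PS_derive binom_half)) w)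
    by (rewrite PSeries_incr_1; ring).
  rewrite <- PSeries_minus by (auto; apply ex_pseries_incr_1; auto).
  replace (PSeries binom_half w / 2) with (PSeries (PS_scal (1/2) binom_half) w)
    by (rewrite PSeries_scal; field).
  apply PSeries_ext. intros [|n]; unfold PS_minus, PS_scal, PS_derive, PS_incr_1;
    change plus with Rplus; change opp with Ropp; change scal with Rmult;
    change mult with Rmult.
  - rewrite binom_half_S, binom_half_0. simpl. unfold zero; simpl. field.
  - rewrite (binom_half_S (S n)), !S_INR. field. pose proof (pos_INR n). lra.
Qed.

Lemma is_derive_binom_half_sqrt w : Rabs w < 1 ->
  is_derive (fun t => PSeries binom_half t * sqrt (1 - t)) w 0.
Proof.
  intros Hw.
  pose proof (CV_radius_bounded_coef _ _ Rabs_binom_half_le_1 Hw) as Hr.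
  assert (H1w : 0 < 1 - w) by (apply Rabs_def2 in Hw; lra).
  assert (Hs : is_derive (fun t => sqrt (1 - t)) w (- / (2 * sqrt (1 - w)))).
  { auto_derive; [lra | unfold Rminus; ring]. }
  pose proof (is_derive_mult _ _ _ _ _ (is_derive_PSeries _ _ Hr) Hs Rmult_comm) as Hm.
  change mult with Rmult in Hm. change plus with Rplus in Hm.
  replace 0 with (PSeries (PS_derive binom_half) w * sqrt (1 - w) +
     PSeries binom_half w * - / (2 * sqrt (1 - w))); [exact Hm|].
  pose proof (binom_half_ode w Hw).
  pose proof (sqrt_lt_R0 _ H1w).
  apply Rmult_eq_reg_r with (2 * sqrt (1 - w)); [|lra].
  field_simplify; [|lra].
  rewrite pow2_sqrt by lra. lra.
Qed.

Lemma PSeries_binom_half w : Rabs w < 1 -> PSeries binom_half w = / sqrt (1 - w).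
Proof.
  intros Hw.
  set (h := fun t => PSeries binom_half t * sqrt (1 - t)).
  assert (Hconst : h w = h 0).
  { pose proof (Rabs_def2 _ _ Hw).
    destruct (Rtotal_order 0 w) as [Hlt | [<- | Hgt]]; [symmetry | reflexivity |];
      apply eq_is_derive; try lra;
      intros t Ht; apply is_derive_binom_half_sqrt, Rabs_def1; lra. }
  unfold h in Hconst.
  rewrite PSeries_0, binom_half_0, Rminus_0_r, sqrt_1 in Hconst.
  assert (H1w : 0 < sqrt (1 - w)) by (apply sqrt_lt_R0; apply Rabs_def2 in Hw; lra).
  apply Rmult_eq_reg_r with (sqrt (1 - w)); [|lra].
  rewrite Hconst. field. lra.
Qed.

Lemma hyp2F1_quarter_coef n :
  poch (1/4) n * poch (3/4) n / (poch (1/2) n * INR (fact n)) = binom_half (2 * n).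
Proof.
  unfold binom_half. rewrite <- (poch_1 (2 * n)), !poch_double.
  replace (1 / 2 / 2) with (1/4) by field.
  replace ((1 / 2 + 1) / 2) with (3/4) by field.
  replace ((1 + 1) / 2) with 1 by field.
  rewrite poch_1. field.
  split; [apply INR_fact_neq_0|].
  split; [apply Rgt_not_eq, poch_pos; lra | apply pow_nonzero; lra].
Qed.

Lemma hyp2F1_quarter_sq w : Rabs w < 1 ->
  hyp2F1 (1/4) (3/4) (1/2) (w ^ 2) = (/ sqrt (1 - w) + / sqrt (1 + w)) / 2.
Proof.
  intros Hw.
  assert (Hw2 : Rabs (w ^ 2) < 1).
  { rewrite <- RPow_abs. pose proof (Rabs_pos w). simpl. nra. }
  assert (Hex : forall f : nat -> nat, ex_pseries (fun n => binom_half (f n)) (w ^ 2)).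
  { intros f. apply CV_disk_correct, CV_disk_bounded_coef; [|exact Hw2].
    intros n. apply Rabs_binom_half_le_1. }
  unfold hyp2F1. fold (PSeries (fun n =>
    poch (1/4) n * poch (3/4) n / (poch (1/2) n * INR (fact n))) (w ^ 2)).
  rewrite (PSeries_ext _ (fun n => binom_half (2 * n))) by apply hyp2F1_quarter_coef.
  pose proof (PSeries_odd_even binom_half w (Hex _) (Hex _)) as Hp.
  pose proof (PSeries_odd_even binom_half (- w)) as Hm.
  replace ((- w) ^ 2) with (w ^ 2) in Hm by ring.
  specialize (Hm (Hex _) (Hex _)).
  rewrite PSeries_binom_half in Hp by exact Hw.
  rewrite PSeries_binom_half in Hm by (rewrite Rabs_Ropp; exact Hw).
  replace (1 - - w) with (1 + w) in Hm by ring.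
  lra.
Qed.

Lemma Rabs_scal_sin_lt_1 k t : 0 < k -> k < 1 -> Rabs (k * sin t) < 1.
Proof.
  intros Hk0 Hk1. rewrite Rabs_mult, (Rabs_right k) by lra.
  assert (Rabs (sin t) <= 1) by (apply Rabs_le, SIN_bound).
  pose proof (Rabs_pos (sin t)). nra.
Qed.

Section Density.

Variable k : R.
Hypothesis k_pos : 0 < k.
Hypothesis k_lt_1 : k < 1.

Definition u_density (t : R) : R :=
  (/ sqrt (1 - k * sin t) + / sqrt (1 + k * sin t)) / 2.

Lemma sqrt_one_pm_scal_sin_pos t :
  0 < sqrt (1 - k * sin t) /\ 0 < sqrt (1 + k * sin t).
Proof.
  pose proof (Rabs_def2 _ _ (Rabs_scal_sin_lt_1 k t k_pos k_lt_1)).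
  split; apply sqrt_lt_R0; lra.
Qed.

Lemma u_density_pos t : 0 < u_density t.
Proof.
  destruct (sqrt_one_pm_scal_sin_pos t) as [HA HB].
  pose proof (Rinv_0_lt_compat _ HA). pose proof (Rinv_0_lt_compat _ HB).
  unfold u_density. lra.
Qed.

Lemma u_density_continuous t : continuous u_density t.
Proof.
  apply (@ex_derive_continuous R_AbsRing R_NormedModule).
  pose proof (Rabs_def2 _ _ (Rabs_scal_sin_lt_1 k t k_pos k_lt_1)).
  unfold u_density. auto_derive.
  repeat split; try lra; apply Rgt_not_eq, sqrt_lt_R0; lra.
Qed.

Lemma ex_RInt_u_density a b : ex_RInt u_density a b.
Proof.
  apply (@ex_RInt_continuous R_CompleteNormedModule).
  intros t _. apply u_density_continuous.
Qed.

Lemma u_of_RInt_u_density phi : u_of k phi = RInt u_density 0 phi.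
Proof.
  apply RInt_ext. intros t _.
  replace (k ^ 2 * sin t ^ 2) with ((k * sin t) ^ 2) by ring.
  apply hyp2F1_quarter_sq, Rabs_scal_sin_lt_1; assumption.
Qed.

Lemma is_derive_u_of phi : is_derive (u_of k) phi (u_density phi).
Proof.
  apply (is_derive_ext (fun x => RInt u_density 0 x)).
  { intros x. symmetry. apply u_of_RInt_u_density. }
  apply (is_derive_RInt u_density _ 0).
  - apply filter_forall. intros x.
    apply (@RInt_correct R_CompleteNormedModule), ex_RInt_u_density.
  - apply u_density_continuous.
Qed.

Lemma u_of_lt a b : a < b -> u_of k a < u_of k b.
Proof.
  intros Hab. rewrite !u_of_RInt_u_density.
  rewrite <- (RInt_Chasles u_density 0 a b) by apply ex_RInt_u_density.
  assert (0 < RInt u_density a b).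
  { apply RInt_gt_0; [exact Hab | |]; intros t _;
      [apply u_density_pos | apply u_density_continuous]. }
  change plus with Rplus. lra.
Qed.

Lemma one_sub_sq_scal_sin_pos t : 0 < 1 - k ^ 2 * sin t ^ 2.
Proof.
  pose proof (Rabs_def2 _ _ (Rabs_scal_sin_lt_1 k t k_pos k_lt_1)). nra.
Qed.

Definition delta_amplitude (t : R) : R := sqrt (1 - k ^ 2 * sin t ^ 2).

Lemma cos_eq_delta_amplitude p t :
  0 < cos p -> sin p = k * sin t -> cos p = delta_amplitude t.
Proof.
  intros Hc Hs. unfold delta_amplitude.
  rewrite <- (sqrt_pow2 (cos p)) by lra. f_equal.
  pose proof (sin2_cos2 p) as Hsc. unfold Rsqr in Hsc. rewrite Hs in Hsc. nra.
Qed.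

Lemma is_derive_delta_amplitude t :
  is_derive delta_amplitude t (- (k ^ 2 * sin t * cos t) / delta_amplitude t).
Proof.
  pose proof (one_sub_sq_scal_sin_pos t). unfold delta_amplitude.
  auto_derive; [lra|].
  replace (1 + - (k * (k * 1) * (sin t * (sin t * 1)))) with (1 - k ^ 2 * sin t ^ 2)
    by ring.
  field. apply Rgt_not_eq, sqrt_lt_R0; assumption.
Qed.

Lemma delta_amplitude_ode t :
  (/ u_density t * (- (k ^ 2 * sin t * cos t) / delta_amplitude t)) ^ 2 =
  2 * (1 - delta_amplitude t) * (delta_amplitude t ^ 2 - sqrt (1 - k ^ 2) ^ 2).
Proof.
  pose proof (Rabs_def2 _ _ (Rabs_scal_sin_lt_1 k t k_pos k_lt_1)).
  destruct (sqrt_one_pm_scal_sin_pos t) as [HA HB].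
  unfold u_density, delta_amplitude.
  set (s := sin t) in *. set (c := cos t).
  assert (Hsc : c ^ 2 = 1 - s ^ 2).
  { pose proof (sin2_cos2 t) as E. unfold Rsqr in E. fold s c in E. lra. }
  set (A := sqrt (1 - k * s)) in *. set (B := sqrt (1 + k * s)) in *.
  assert (HA2 : A ^ 2 = 1 - k * s) by (apply pow2_sqrt; lra).
  assert (HB2 : B ^ 2 = 1 + k * s) by (apply pow2_sqrt; lra).
  assert (HAB : sqrt (1 - k ^ 2 * s ^ 2) = A * B).
  { unfold A, B. rewrite <- sqrt_mult by lra. f_equal. ring. }
  assert (Hl : sqrt (1 - k ^ 2) ^ 2 = 1 - k ^ 2) by (apply pow2_sqrt; nra).
  rewrite HAB, Hl.
  (* [(A + B)^2 = 2 (1 + A B)] turns the claim into a polynomial identity *)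
  replace (/ ((/ A + / B) / 2) * (- (k ^ 2 * s * c) / (A * B)))
    with (- (2 * k ^ 2 * s * c) / (A + B)) by (field; lra).
  apply Rmult_eq_reg_r with ((A + B) ^ 2); [|nra].
  replace ((- (2 * k ^ 2 * s * c) / (A + B)) ^ 2 * (A + B) ^ 2)
    with (4 * k ^ 4 * s ^ 2 * c ^ 2) by (field; lra).
  replace ((A + B) ^ 2) with (2 + 2 * (A * B)) by nra.
  replace (2 * (1 - A * B) * ((A * B) ^ 2 - (1 - k ^ 2)) * (2 + 2 * (A * B)))
    with (4 * (1 - A ^ 2 * B ^ 2) * (A ^ 2 * B ^ 2 - (1 - k ^ 2))) by ring.
  rewrite HA2, HB2, Hsc. ring.
Qed.

End Density.

Lemma continuity_nonvanishing_pos (c : R -> R) (a b x0 x : R) :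
  (forall y, a < y < b -> continuity_pt c y) ->
  (forall y, a < y < b -> c y <> 0) ->
  a < x0 < b -> a < x < b -> 0 < c x0 -> 0 < c x.
Proof.
  intros Hc Hnz Hx0 Hx Hpos.
  destruct (Rlt_or_le 0 (c x)) as [|[Hneg | E]];
    [assumption | exfalso | now destruct (Hnz x Hx)].
  destruct (Rtotal_order x0 x) as [Hlt | [<- | Hgt]]; [| lra |].
  - destruct (IVT_interv (fun y => - c y) x0 x) as [z [Hz Hcz]]; [| lra .. |].
    + intros y Hy. apply continuity_pt_opp, Hc. lra.
    + apply (Hnz z); lra.
  - destruct (IVT_interv c x x0) as [z [Hz Hcz]]; [| lra .. |].
    + intros y Hy. apply Hc. lra.
    + apply (Hnz z); lra.
Qed.

Lemma is_derive_local_inverse (u u' phi : R -> R) (a b v : R) :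
  (forall x y, x < y -> u x < u y) ->
  (forall x, is_derive u x (u' x)) ->
  (forall x, a < x < b -> u (phi x) = x) ->
  a < v < b -> u' (phi v) <> 0 ->
  is_derive phi v (/ u' (phi v)).
Proof.
  intros Hinc Hder Hinv Hv Hnz.
  set (lb := (a + v) / 2). set (ub := (v + b) / 2).
  assert (Hinv' : forall x, lb <= x <= ub -> u (phi x) = x)
    by (intros x Hx; apply Hinv; unfold lb, ub in Hx; lra).
  assert (Hreflect : forall x y, u x <= u y -> x <= y).
  { intros x y H. destruct (Rle_or_lt x y) as [|Hyx]; [assumption|].
    apply Hinc in Hyx. lra. }
  assert (Hmono : forall x, lb <= x <= ub -> phi lb <= phi x <= phi ub).
  { intros x Hx. split; apply Hreflect; rewrite !Hinv'; unfold lb, ub in *; lra. }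
  assert (Hlt : phi lb < phi ub).
  { assert (Hle : phi lb <= phi ub) by (apply Hmono; unfold lb, ub; lra).
    destruct Hle as [|E]; [assumption|].
    apply (f_equal u) in E. rewrite !Hinv' in E; unfold lb, ub in *; lra. }
  assert (Hcomp : forall x, lb <= x <= ub -> comp u phi x = id x) by exact Hinv'.
  assert (Hder_pt : forall x, derivable_pt u x)
    by (intros x; exists (u' x); apply is_derive_Reals, Hder).
  assert (Hcont : continuity_pt phi v).
  { apply (continuity_pt_recip_interv u phi (phi lb) (phi ub) Hlt).
    - intros x y _ Hxy _. apply Hinc, Hxy.
    - intros x H1 H2. apply Hcomp. rewrite !Hinv' in H1, H2; unfold lb, ub in *; lra.
    - intros x H1 H2. apply Hmono. rewrite !Hinv' in H1, H2; unfold lb, ub in *; lra.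
    - intros x _. apply derivable_continuous_pt, Hder_pt.
    - rewrite !Hinv'; unfold lb, ub; lra. }
  assert (Hv' : lb < v < ub) by (unfold lb, ub; lra).
  pose proof (derivable_pt_lim_recip_interv u phi lb ub v (fun x _ => Hder_pt x)
    Hcont ltac:(lra) Hv' (Hmono v ltac:(lra)) Hcomp) as Hrecip.
  rewrite (derive_pt_eq_0 _ _ _ _ (proj1 (is_derive_Reals _ _ _) (Hder (phi v)))) in Hrecip.
  apply is_derive_Reals. rewrite <- (Rmult_1_l (/ _)). apply Hrecip, Hnz.
Qed.

Lemma cos_pos_of_sin_eq_scal_sin (k delta : R) (phi psi : R -> R) :
  0 < k -> k < 1 -> psi 0 = 0 ->
  (forall v, Rabs v < delta -> continuous psi v) ->
  (forall v, Rabs v < delta -> sin (psi v) = k * sin (phi v)) ->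
  forall v, Rabs v < delta -> 0 < cos (psi v).
Proof.
  intros Hk0 Hk1 Hpsi0 Hcont Hsin v Hv.
  pose proof (Rabs_def2 _ _ Hv).
  assert (Hball : forall y, - delta < y < delta -> Rabs y < delta)
    by (intros y Hy; apply Rabs_def1; lra).
  apply (continuity_nonvanishing_pos (fun y => cos (psi y)) (- delta) delta 0 v).
  - intros y Hy. apply continuity_pt_filterlim.
    apply (continuous_comp psi cos); [apply Hcont, Hball, Hy | apply continuous_cos].
  - intros y Hy Hc.
    pose proof (sin2_cos2 (psi y)) as E. unfold Rsqr in E.
    rewrite Hsin, Hc in E by (apply Hball, Hy).
    pose proof (one_sub_sq_scal_sin_pos k Hk0 Hk1 (phi y)). nra.
  - lra.
  - lra.
  - rewrite Hpsi0, cos_0. lra.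
Qed.

Theorem theorem3 (kappa delta : R) (phi psi : R -> R) :
  0 < kappa -> kappa < 1 -> 0 < delta ->
  (* phi is the local inverse of u near 0, with phi(0) = 0 *)
  phi 0 = 0 ->
  (forall v, Rabs v < delta -> u_of kappa (phi v) = v) ->
  (* psi is defined (continuously) near 0, psi(0) = 0, sin psi = kappa sin phi *)
  psi 0 = 0 ->
  (forall v, Rabs v < delta -> continuous psi v) ->
  (forall v, Rabs v < delta -> sin (psi v) = kappa * sin (phi v)) ->
  let lambda := sqrt (1 - kappa ^ 2) in
  let d := fun v => cos (psi v) in
  forall v, Rabs v < delta ->
    ex_derive d v /\
    (Derive d v) ^ 2 = 2 * (1 - d v) * ((d v) ^ 2 - lambda ^ 2).
Proof.
  intros Hk0 Hk1 _ _ Hinv Hpsi0 Hcont Hsin lambda d v Hv.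
  pose proof (Rabs_def2 _ _ Hv).
  assert (Hphi : is_derive phi v (/ u_density kappa (phi v))).
  { apply (is_derive_local_inverse (u_of kappa) _ phi (- delta) delta).
    - intros x y. apply u_of_lt; assumption.
    - intros x. apply is_derive_u_of; assumption.
    - intros x Hx. apply Hinv, Rabs_def1; lra.
    - lra.
    - apply Rgt_not_eq, u_density_pos; assumption. }
  assert (Hd_loc : locally v (fun t => delta_amplitude kappa (phi t) = d t)).
  { exists (mkposreal (delta - Rabs v) ltac:(lra)). intros t Ht.
    change (Rabs (t - v) < delta - Rabs v) in Ht.
    pose proof (Rabs_triang_inv t v).
    symmetry. apply cos_eq_delta_amplitude, Hsin; try lra.
    apply (cos_pos_of_sin_eq_scal_sin kappa delta phi psi); auto; lra. }
  assert (Hd : is_derive d v (/ u_density kappa (phi v) *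
      (- (kappa ^ 2 * sin (phi v) * cos (phi v)) / delta_amplitude kappa (phi v)))).
  { apply (is_derive_ext_loc _ _ _ _ Hd_loc), (is_derive_comp (delta_amplitude kappa));
      [apply is_derive_delta_amplitude | exact Hphi]; assumption. }
  split; [eexists; exact Hd|].
  rewrite (is_derive_unique _ _ _ Hd), <- (locally_singleton _ _ Hd_loc).
  apply delta_amplitude_ode; assumption.
Qed.
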